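(* Let $\lambda=\langle\lambda_j\rangle_{j=1}^\infty$ with $0<\lambda_j<\frac12$ for all $j$ and $\sum_{j=1}^\infty\lambda_j<1$. Let $\{u_j\}_{j\ge1}$ be unit vectors in a separable Hilbert space $H$ such that $\sum_{j=2}^\infty u_j\otimes u_j$ converges in the strong operator topology, and let $$B=\Big(1-\sum_{j=1}^\infty\lambda_j\Big)u_1\otimes u_1+\sum_{j=2}^\infty u_j\otimes u_j.$$ Then $\langle 1-\lambda_j\rangle_{j=1}^\infty\in\operatorname{Adm}(B)$.
   Context: For vectors $x,y$, $x\otimes y$ denotes the rank-one operator $z\mapsto(z,y)x$. $\operatorname{Adm}(B)$ is the set of sequences $\xi\in\ell^\infty_+$ such that $B=\sum_j\xi_jP_j$ for some rank-one projections $P_j$ (series converging in the strong operator topology if infinite). *)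

From Stdlib Require Import Reals.
Open Scope R_scope.

Record C := mkC { Re : R; Im : R }.
Definition C0 : C := mkC 0 0.
Definition C1 : C := mkC 1 0.
Definition RtoC (r : R) : C := mkC r 0.
Definition Cadd (a b : C) : C := mkC (Re a + Re b) (Im a + Im b).
Definition Cmul (a b : C) : C :=
  mkC (Re a * Re b - Im a * Im b) (Re a * Im b + Im a * Re b).
Definition Cconj (a : C) : C := mkC (Re a) (- Im a).

(* ---------- complex Hilbert spaces (separable) ----------
   inner product linear in the first argument, conjugate-linear in the second,
   so that (x ⊗ y) z = (z,y) x. *)
Record SepHilbert := {
  hcar :> Type;
  hzero : hcar;
  hadd : hcar -> hcar -> hcar;
  hopp : hcar -> hcar;
  hscal : C -> hcar -> hcar;
  inner : hcar -> hcar -> C;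
  hadd_assoc : forall x y z, hadd x (hadd y z) = hadd (hadd x y) z;
  hadd_comm : forall x y, hadd x y = hadd y x;
  hadd_0 : forall x, hadd x hzero = x;
  hadd_opp : forall x, hadd x (hopp x) = hzero;
  hscal_1 : forall x, hscal C1 x = x;
  hscal_assoc : forall a b x, hscal a (hscal b x) = hscal (Cmul a b) x;
  hscal_distr_v : forall a x y, hscal a (hadd x y) = hadd (hscal a x) (hscal a y);
  hscal_distr_s : forall a b x, hscal (Cadd a b) x = hadd (hscal a x) (hscal b x);
  inner_add_l : forall x y z, inner (hadd x y) z = Cadd (inner x z) (inner y z);
  inner_scal_l : forall a x z, inner (hscal a x) z = Cmul a (inner x z);
  inner_conj : forall x y, inner y x = Cconj (inner x y);
  inner_pos : forall x, 0 <= Re (inner x x);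
  inner_def : forall x, inner x x = C0 -> x = hzero;
  hcomplete : forall s : nat -> hcar,
    (forall eps, eps > 0 -> exists N, forall n m, (n >= N)%nat -> (m >= N)%nat ->
        sqrt (Re (inner (hadd (s n) (hopp (s m))) (hadd (s n) (hopp (s m))))) < eps) ->
    exists l, forall eps, eps > 0 -> exists N, forall n, (n >= N)%nat ->
        sqrt (Re (inner (hadd (s n) (hopp l)) (hadd (s n) (hopp l)))) < eps;
  hseparable : exists d : nat -> hcar, forall x eps, eps > 0 -> exists n,
        sqrt (Re (inner (hadd x (hopp (d n))) (hadd x (hopp (d n))))) < eps
}.

Section Ops.
Variable H : SepHilbert.

Definition hnorm (x : H) : R := sqrt (Re (inner H x x)).
Definition hsub (x y : H) : H := hadd H x (hopp H y).

Definition rank1 (x y : H) : H -> H := fun z => hscal H (inner H z y) x.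

Definition vconv (s : nat -> H) (l : H) : Prop :=
  forall eps, eps > 0 -> exists N, forall n, (n >= N)%nat -> hnorm (hsub (s n) l) < eps.

Fixpoint vsum (f : nat -> H) (n : nat) : H :=
  match n with O => hzero H | S k => hadd H (vsum f k) (f k) end.

Definition sot_sum (T : nat -> (H -> H)) (A : H -> H) : Prop :=
  forall x, vconv (fun n => vsum (fun j => T j x) n) (A x).

Definition rank1_proj (P : H -> H) : Prop :=
  (forall x y, inner H (P x) y = inner H x (P y)) /\
  (forall x, P (P x) = P x) /\
  exists v : H, v <> hzero H /\ P v = v /\ (forall x, exists c : C, P x = hscal H c v).

Definition Adm (B : H -> H) (xi : nat -> R) : Prop :=
  (forall j, 0 <= xi j) /\ (exists M, forall j, xi j <= M) /\
  exists P : nat -> (H -> H), (forall j, rank1_proj (P j)) /\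
    sot_sum (fun j x => hscal H (RtoC (xi j)) (P j x)) B.

End Ops.

From Pilot Require Import Defs.
From Stdlib Require Import Reals Lra Psatz.
Open Scope R_scope.

(* Let T_n = sum_{k >= n} lam_k and b_0 = sqrt (1 - s) u_0.  At step n pick a unimodular
   multiple y_n of u_{n+1} with Re (b_n, y_n) = 0 and rotate the pair (b_n, y_n) by the real
   angle with cosine gam_n = sqrt (lam_n / T_n) and sine sig_n = sqrt (T_{n+1} / T_n):
   a_n = gam_n b_n + sig_n y_n,  b_{n+1} = - sig_n b_n + gam_n y_n.
   Real rotations preserve a (x) a + b (x) b, so
   sum_{j<n} a_j (x) a_j + b_n (x) b_n = b_0 (x) b_0 + sum_{1 <= j <= n} u_j (x) u_j,
   while |b_n|^2 = 1 - T_n and |a_j|^2 = 1 - lam_j, making a_j (x) a_j / (1 - lam_j) rank-one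
   projections.  Finally |(x, b_{n+1})|^2 <= sig_n |(x, b_n)|^2 + 2 |(x, u_{n+1})|^2, and since
   the products of the sig_n are sqrt (T_n / T_m) -> 0 and sum_j |(x, u_j)|^2 < oo, the remainder
   b_n (x) b_n x tends to 0. *)

Arguments hadd_assoc {s0} x y z.
Arguments hadd_comm {s0} x y.
Arguments hadd_0 {s0} x.
Arguments hadd_opp {s0} x.
Arguments hscal_1 {s0} x.
Arguments hscal_assoc {s0} a b x.
Arguments hscal_distr_v {s0} a x y.
Arguments hscal_distr_s {s0} a b x.
Arguments inner_add_l {s0} x y z.
Arguments inner_scal_l {s0} a x z.
Arguments inner_conj {s0} x y.
Arguments inner_pos {s0} x.
Arguments inner_def {s0} x.

Notation "x +v y" := (hadd _ x y) (at level 50, left associativity).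
Notation "c *v x" := (hscal _ c x) (at level 40, no associativity).

Lemma C_ext (a b : Defs.C) : Re a = Re b -> Im a = Im b -> a = b.
Proof. destruct a, b; simpl; intros; subst; reflexivity. Qed.

Ltac Cext := apply C_ext; simpl.

Definition cabs2 (c : Defs.C) : R := Re c * Re c + Im c * Im c.

Lemma cabs2_ge0 (c : Defs.C) : 0 <= cabs2 c.
Proof. unfold cabs2; nra. Qed.

Lemma cabs2_mul (a b : Defs.C) : cabs2 (Cmul a b) = cabs2 a * cabs2 b.
Proof. unfold cabs2; simpl; ring. Qed.

Lemma cabs2_conj (a : Defs.C) : cabs2 (Cconj a) = cabs2 a.
Proof. unfold cabs2; simpl; ring. Qed.

Definition orth_phase (c : Defs.C) : Defs.C :=
  match Rlt_dec 0 (cabs2 c) with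
  | left _ => mkC (- Im c / sqrt (cabs2 c)) (Re c / sqrt (cabs2 c))
  | right _ => Defs.C1
  end.

Lemma cabs2_orth_phase (c : Defs.C) : cabs2 (orth_phase c) = 1.
Proof.
  unfold orth_phase. destruct (Rlt_dec _ _) as [h|h]; [|unfold cabs2; simpl; ring].
  pose proof (sqrt_lt_R0 _ h) as Hpos. pose proof (sqrt_sqrt (cabs2 c) ltac:(lra)) as Hsq.
  revert Hpos Hsq. unfold cabs2; simpl. set (r := sqrt _). intros Hpos Hsq.
  apply Rmult_eq_reg_r with (r * r); [field_simplify; lra | nra].
Qed.

Lemma Re_conj_orth_phase (c : Defs.C) : Re (Cmul (Cconj (orth_phase c)) c) = 0.
Proof.
  unfold orth_phase. destruct (Rlt_dec _ _) as [h|h]; simpl.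
  - pose proof (sqrt_lt_R0 _ h). field. lra.
  - unfold cabs2 in h. assert (Re c = 0 /\ Im c = 0) as [-> ->] by (split; nra). ring.
Qed.

Lemma rot_sq_le (t g z e : R) : 0 <= t <= 1 -> 0 <= g -> t * t + g * g = 1 ->
  (- t * z + g * e) * (- t * z + g * e) <= t * (z * z) + 2 * (e * e).
Proof.
  intros Ht Hg E.
  assert (amgm : 0 <= (1 - t) * (z * z) + (1 + t) * (e * e) + 2 * g * z * e).
  { destruct (Req_dec t 1) as [->|Ht1].
    - assert (g = 0) by nra. subst. nra.
    - apply Rmult_le_reg_l with (1 - t); [lra|].
      replace ((1 - t) * ((1 - t) * (z * z) + (1 + t) * (e * e) + 2 * g * z * e))
        with (((1 - t) * z + g * e) * ((1 - t) * z + g * e) + (1 - (t * t + g * g)) * (e * e))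
        by ring.
      rewrite E, Rminus_diag, Rmult_0_l, Rplus_0_r, Rmult_0_r. apply Rle_0_sqr. }
  assert (0 <= t * ((1 - t) * (z * z) + (1 + t) * (e * e) + 2 * g * z * e)) by nra.
  nra.
Qed.

Lemma cabs2_rot_le (t g : R) (z e : Defs.C) : 0 <= t <= 1 -> 0 <= g -> t * t + g * g = 1 ->
  cabs2 (Cadd (Cmul (RtoC (- t)) z) (Cmul (RtoC g) e)) <= t * cabs2 z + 2 * cabs2 e.
Proof.
  intros Ht Hg E. unfold cabs2; simpl.
  pose proof (rot_sq_le t g (Re z) (Re e) Ht Hg E).
  pose proof (rot_sq_le t g (Im z) (Im e) Ht Hg E).
  replace (- t * Re z - 0 * Im z + (g * Re e - 0 * Im e)) with (- t * Re z + g * Re e) by ring.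
  replace (- t * Im z + 0 * Re z + (g * Im e + 0 * Re e)) with (- t * Im z + g * Im e) by ring.
  lra.
Qed.

Section Hilbert.
Variable H : SepHilbert.
Implicit Types x y z v w : H.

Definition sqnorm x : R := Re (inner H x x).

Lemma hadd_0_l x : hzero H +v x = x.
Proof. rewrite hadd_comm; apply hadd_0. Qed.

Lemma hscal_0 x : C0 *v x = hzero H.
Proof.
  assert (E : C0 *v x = C0 *v x +v C0 *v x).
  { rewrite <- hscal_distr_s. f_equal. Cext; ring. }
  transitivity (C0 *v x +v C0 *v x +v hopp H (C0 *v x)).
  - rewrite <- hadd_assoc, hadd_opp, hadd_0. reflexivity.
  - rewrite <- E. apply hadd_opp.
Qed.

Lemma hopp_scal x : hopp H x = RtoC (-1) *v x.
Proof.
  assert (Z : x +v RtoC (-1) *v x = hzero H).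
  { rewrite <- (hscal_1 x) at 1. rewrite <- hscal_distr_s.
    replace (Cadd Defs.C1 (RtoC (-1))) with C0 by (Cext; ring). apply hscal_0. }
  rewrite <- (hadd_0 (hopp H x)), <- Z, hadd_assoc, (hadd_comm (hopp H x) x), hadd_opp.
  apply hadd_0_l.
Qed.

Lemma hscal_RtoC1 x : RtoC 1 *v x = x.
Proof. apply hscal_1. Qed.

Lemma inner_add_r z x y : inner H z (x +v y) = Cadd (inner H z x) (inner H z y).
Proof.
  rewrite (inner_conj (x +v y) z), inner_add_l, (inner_conj x z), (inner_conj y z).
  Cext; ring.
Qed.

Lemma inner_scal_r z x a : inner H z (a *v x) = Cmul (Cconj a) (inner H z x).
Proof.
  rewrite (inner_conj (a *v x) z), inner_scal_l, (inner_conj x z).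
  destruct a, (inner H x z); Cext; ring.
Qed.

Lemma inner_zero_l x : inner H (hzero H) x = C0.
Proof. rewrite <- (hscal_0 (hzero H)), inner_scal_l. Cext; ring. Qed.

Lemma Im_inner_self x : Im (inner H x x) = 0.
Proof. pose proof (f_equal Im (inner_conj x x)) as E. simpl in E. lra. Qed.

Lemma Re_inner_sym x y : Re (inner H y x) = Re (inner H x y).
Proof. rewrite (inner_conj x y). reflexivity. Qed.

Lemma sqnorm_ge0 x : 0 <= sqnorm x.
Proof. apply inner_pos. Qed.

Lemma sqnorm_eq0 x : sqnorm x = 0 -> x = hzero H.
Proof.
  intro E. apply inner_def. unfold sqnorm in E. pose proof (Im_inner_self x).
  Cext; assumption.
Qed.

Lemma sqnorm_scal (c : Defs.C) x : sqnorm (c *v x) = cabs2 c * sqnorm x.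
Proof.
  unfold sqnorm, cabs2. rewrite inner_scal_l, inner_scal_r.
  pose proof (Im_inner_self x).
  destruct c, (inner H x x); simpl in *; subst; ring.
Qed.

Lemma sqnorm_lincomb (p q : R) v w :
  sqnorm (RtoC p *v v +v RtoC q *v w) =
  p * p * sqnorm v + q * q * sqnorm w + 2 * p * q * Re (inner H v w).
Proof.
  unfold sqnorm. rewrite inner_add_l, !inner_add_r, !inner_scal_l, !inner_scal_r.
  pose proof (Re_inner_sym v w) as E.
  pose proof (Im_inner_self v). pose proof (Im_inner_self w).
  destruct (inner H v v), (inner H w w), (inner H v w), (inner H w v); simpl in *.
  subst. nra.
Qed.

Lemma sqnorm_add v w : sqnorm (v +v w) = sqnorm v + sqnorm w + 2 * Re (inner H v w).
Proof. pose proof (sqnorm_lincomb 1 1 v w) as E. rewrite !hscal_RtoC1 in E. lra. Qed.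

Lemma Re_inner_sq_le v w : Re (inner H v w) * Re (inner H v w) <= sqnorm v * sqnorm w.
Proof.
  set (r := Re (inner H v w)).
  assert (Hq : forall t, 0 <= sqnorm v + 2 * t * r + t * t * sqnorm w).
  { intro t. pose proof (sqnorm_ge0 (RtoC 1 *v v +v RtoC t *v w)) as G.
    rewrite sqnorm_lincomb in G. unfold r. nra. }
  pose proof (sqnorm_ge0 v); pose proof (sqnorm_ge0 w).
  destruct (Req_dec (sqnorm w) 0) as [E|E].
  - destruct (Req_dec r 0) as [E2|E2]; [rewrite E2, E; lra|].
    specialize (Hq (- (sqnorm v + 1) / (2 * r))). rewrite E in Hq.
    replace (2 * (- (sqnorm v + 1) / (2 * r)) * r) with (- (sqnorm v + 1)) in Hq
      by (field; exact E2).
    lra.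
  - specialize (Hq (- r / sqnorm w)).
    apply Rmult_le_reg_r with (/ sqnorm w); [apply Rinv_0_lt_compat; lra|].
    replace (sqnorm v * sqnorm w * / sqnorm w) with (sqnorm v) by (field; lra).
    replace (r * r * / sqnorm w)
      with (- (2 * (- r / sqnorm w) * r + - r / sqnorm w * (- r / sqnorm w) * sqnorm w))
      by (field; lra).
    lra.
Qed.

Lemma Rabs_Re_inner_le v w : Rabs (Re (inner H v w)) <= hnorm H v * hnorm H w.
Proof.
  unfold hnorm. fold (sqnorm v) (sqnorm w).
  rewrite <- sqrt_mult_alt, <- sqrt_Rsqr_abs by apply sqnorm_ge0.
  apply sqrt_le_1_alt, Re_inner_sq_le.
Qed.

Lemma hnorm_add_le v w : hnorm H (v +v w) <= hnorm H v + hnorm H w.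
Proof.
  pose proof (Rabs_Re_inner_le v w). pose proof (Rle_abs (Re (inner H v w))).
  unfold hnorm in *. fold (sqnorm (v +v w)) (sqnorm v) (sqnorm w) in *.
  pose proof (sqrt_pos (sqnorm v)); pose proof (sqrt_pos (sqnorm w)).
  rewrite <- (sqrt_square (sqrt (sqnorm v) + sqrt (sqnorm w))) by lra.
  apply sqrt_le_1_alt. rewrite sqnorm_add.
  pose proof (sqrt_sqrt (sqnorm v) (sqnorm_ge0 v)).
  pose proof (sqrt_sqrt (sqnorm w) (sqnorm_ge0 w)).
  nra.
Qed.

Lemma hnorm_scal (c : Defs.C) x : hnorm H (c *v x) = sqrt (cabs2 c * sqnorm x).
Proof. unfold hnorm. fold (sqnorm (c *v x)). rewrite sqnorm_scal. reflexivity. Qed.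

Lemma hnorm_opp x : hnorm H (hopp H x) = hnorm H x.
Proof.
  rewrite hopp_scal, hnorm_scal. unfold hnorm, cabs2; simpl. f_equal. fold (sqnorm x). ring.
Qed.

Lemma Re_inner_hsub x y z : Re (inner H (hsub H x y) z) = Re (inner H x z) - Re (inner H y z).
Proof. unfold hsub. rewrite inner_add_l, hopp_scal, inner_scal_l. simpl. ring. Qed.

Lemma vconv_Re_inner (f : nat -> H) (l y : H) :
  vconv H f l -> Un_cv (fun n => Re (inner H (f n) y)) (Re (inner H l y)).
Proof.
  intros Hf eps He. assert (Hy : 0 <= hnorm H y) by apply sqrt_pos.
  destruct (Hf (eps / (hnorm H y + 1))) as [N HN]; [apply Rdiv_lt_0_compat; lra|].
  exists N. intros n Hn. unfold Rdist. rewrite <- Re_inner_hsub.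
  eapply Rle_lt_trans; [apply Rabs_Re_inner_le|].
  specialize (HN n Hn). set (h := hnorm H y) in *.
  apply Rle_lt_trans with (eps / (h + 1) * h); [apply Rmult_le_compat_r; lra|].
  apply Rmult_lt_reg_r with (h + 1); [lra|].
  replace (eps / (h + 1) * h * (h + 1)) with (eps * h) by (field; lra). nra.
Qed.

Lemma hadd_swap x y z : x +v (y +v z) = y +v (x +v z).
Proof. rewrite !hadd_assoc, (hadd_comm x y). reflexivity. Qed.

Lemma hsub_perturb a e c s l : a +v e = c +v s -> hsub H a (c +v l) = hsub H s l +v hopp H e.
Proof.
  intro E. assert (Ea : a = c +v s +v hopp H e).
  { rewrite <- E, <- hadd_assoc, hadd_opp, hadd_0. reflexivity. }
  subst a. unfold hsub. rewrite !hopp_scal, hscal_distr_v, <- !hopp_scal.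
  rewrite <- !hadd_assoc, hadd_swap. f_equal.
  rewrite hadd_swap, (hadd_assoc c), hadd_opp, hadd_0_l. apply hadd_comm.
Qed.

Lemma vconv_perturb (a e s : nat -> H) (c l : H) :
  (forall n, a n +v e n = c +v s n) -> vconv H s l -> Un_cv (fun n => hnorm H (e n)) 0 ->
  vconv H a (c +v l).
Proof.
  intros E Hs He eps Heps.
  destruct (Hs (eps / 2) ltac:(lra)) as [N1 HN1].
  destruct (He (eps / 2) ltac:(lra)) as [N2 HN2].
  exists (max N1 N2). intros n Hn.
  specialize (HN1 n ltac:(lia)). specialize (HN2 n ltac:(lia)).
  unfold Rdist in HN2. rewrite Rminus_0_r in HN2. pose proof (Rle_abs (hnorm H (e n))).
  rewrite (hsub_perturb _ _ _ _ _ (E n)).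
  eapply Rle_lt_trans; [apply hnorm_add_le|]. rewrite hnorm_opp. lra.
Qed.

Lemma vsum_ext (f g : nat -> H) n : (forall j, f j = g j) -> vsum H f n = vsum H g n.
Proof. intro E. induction n; simpl; [reflexivity | rewrite IHn, E; reflexivity]. Qed.

Lemma sot_sum_ext (T T' : nat -> H -> H) (A : H -> H) :
  (forall j x, T j x = T' j x) -> sot_sum H T A -> sot_sum H T' A.
Proof.
  intros E HT x eps He. destruct (HT x eps He) as [N HN]. exists N. intros n Hn.
  rewrite (vsum_ext _ (fun j => T j x)) by (intro j; symmetry; apply E). exact (HN n Hn).
Qed.

Lemma rank1_scal (c : Defs.C) v x :
  rank1 H (c *v v) (c *v v) x = RtoC (cabs2 c) *v rank1 H v v x.
Proof.
  unfold rank1. rewrite inner_scal_r, !hscal_assoc. f_equal.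
  unfold cabs2. destruct c, (inner H x v); Cext; ring.
Qed.

Lemma hadd_lincomb (p q p' q' : Defs.C) v w :
  (p *v v +v q *v w) +v (p' *v v +v q' *v w) = Cadd p p' *v v +v Cadd q q' *v w.
Proof.
  rewrite !hscal_distr_s, <- !hadd_assoc. f_equal.
  rewrite !hadd_assoc. f_equal. apply hadd_comm.
Qed.

Lemma rank1_rot (g t : R) b y x : g * g + t * t = 1 ->
  rank1 H (RtoC g *v b +v RtoC t *v y) (RtoC g *v b +v RtoC t *v y) x +v
  rank1 H (RtoC (- t) *v b +v RtoC g *v y) (RtoC (- t) *v b +v RtoC g *v y) x =
  rank1 H b b x +v rank1 H y y x.
Proof.
  intro E. unfold rank1. rewrite !inner_add_r, !inner_scal_r, !hscal_distr_v, !hscal_assoc.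
  rewrite hadd_lincomb.
  f_equal; f_equal; destruct (inner H x b), (inner H x y); Cext;
    match goal with |- _ = ?v => transitivity ((g * g + t * t) * v); [ring | rewrite E; ring] end.
Qed.

Lemma inner_self x : inner H x x = RtoC (sqnorm x).
Proof. pose proof (Im_inner_self x). Cext; [reflexivity | assumption]. Qed.

Definition proj_onto (a : H) (z : H) : H := RtoC (/ sqnorm a) *v rank1 H a a z.

Lemma proj_onto_rank1_proj a : a <> hzero H -> rank1_proj H (proj_onto a).
Proof.
  intro Ha. assert (Hm : sqnorm a <> 0) by (intro E; apply Ha, sqnorm_eq0, E).
  unfold rank1_proj, proj_onto, rank1. split; [|split].
  - intros x y. rewrite !hscal_assoc, inner_scal_l, inner_scal_r.
    rewrite (inner_conj a y). destruct (inner H x a), (inner H a y); Cext; ring.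
  - intro x. rewrite !hscal_assoc, inner_scal_l, inner_self. f_equal.
    destruct (inner H x a); Cext; field; exact Hm.
  - exists a. split; [exact Ha|split].
    + rewrite hscal_assoc, inner_self.
      replace (Cmul (RtoC (/ sqnorm a)) (RtoC (sqnorm a))) with Defs.C1 by (Cext; field; exact Hm).
      apply hscal_1.
    + intro x. eexists. apply hscal_assoc.
Qed.

Lemma hscal_sqnorm_proj_onto a z :
  a <> hzero H -> RtoC (sqnorm a) *v proj_onto a z = rank1 H a a z.
Proof.
  intro Ha. assert (Hm : sqnorm a <> 0) by (intro E; apply Ha, sqnorm_eq0, E).
  unfold proj_onto. rewrite hscal_assoc.
  replace (Cmul (RtoC (sqnorm a)) (RtoC (/ sqnorm a))) with Defs.C1 by (Cext; field; exact Hm).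
  apply hscal_1.
Qed.

End Hilbert.

(* [psum f n = f 0 + ... + f (n - 1)], unlike [sum_f_R0 f n] which has [n + 1] terms. *)
Fixpoint psum (f : nat -> R) (n : nat) : R :=
  match n with O => 0 | S k => psum f k + f k end.

Lemma psum_S_sum_f_R0 (f : nat -> R) n : psum f (S n) = sum_f_R0 f n.
Proof. induction n as [|n IH]; simpl in *; [ring | rewrite <- IH; reflexivity]. Qed.

Lemma psum_le (f : nat -> R) n m : (forall j, 0 <= f j) -> (n <= m)%nat -> psum f n <= psum f m.
Proof. intros Hf Hnm. induction Hnm as [|m _ IH]; simpl; [lra | specialize (Hf m); lra]. Qed.

Lemma Un_cv_psum (f : nat -> R) (l : R) : infinite_sum f l -> Un_cv (psum f) l.
Proof.
  intros Hf eps He. destruct (Hf eps He) as [N HN]. exists (S N). intros [|n] Hn; [lia|].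
  rewrite psum_S_sum_f_R0. apply HN. lia.
Qed.

Lemma Un_cv_0_of_sq_le (a b : nat -> R) :
  (forall n, 0 <= a n) -> (forall n, a n * a n <= b n) -> Un_cv b 0 -> Un_cv a 0.
Proof.
  intros Ha Hab Hb eps He. destruct (Hb (eps * eps) ltac:(nra)) as [N HN].
  exists N. intros n Hn. specialize (HN n Hn). specialize (Hab n). specialize (Ha n).
  unfold Rdist in *. rewrite Rminus_0_r in *. rewrite Rabs_right in * by nra. nra.
Qed.

Section Contraction.
Variables (w d r sig : nat -> R) (K : R).
Hypothesis K_ge0 : 0 <= K.
Hypothesis r_pos : forall n, 0 < r n.
Hypothesis w_ge0 : forall n, 0 <= w n.
Hypothesis d_ge0 : forall n, 0 <= d n.
Hypothesis sig_bounds : forall n, 0 <= sig n <= 1.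
Hypothesis sig_r : forall n, sig n * r n = r (S n).
Hypothesis w_rec : forall n, w (S n) <= sig n * w n + K * d n.

Lemma contraction_unroll N k :
  w (N + k)%nat <= r (N + k)%nat / r N * w N + K * (psum d (N + k) - psum d N).
Proof.
  pose proof (r_pos N). induction k as [|k IH].
  - rewrite Nat.add_0_r. replace (r N / r N) with 1 by (field; lra). lra.
  - rewrite Nat.add_succ_r. simpl psum. rewrite <- sig_r.
    set (m := (N + k)%nat) in *.
    assert (0 <= psum d m - psum d N) by (pose proof (psum_le d N m d_ge0 ltac:(lia)); lra).
    pose proof (w_rec m). pose proof (sig_bounds m). pose proof (w_ge0 N). pose proof (d_ge0 m).
    assert (sig m * w m <= sig m * (r m / r N * w N + K * (psum d m - psum d N)))
      by (apply Rmult_le_compat_l; lra).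
    assert (0 <= K * (psum d m - psum d N)) by (apply Rmult_le_pos; lra).
    assert (sig m * (K * (psum d m - psum d N)) <= K * (psum d m - psum d N)) by nra.
    replace (sig m * r m / r N * w N) with (sig m * (r m / r N * w N)) by (field; lra).
    lra.
Qed.

Lemma contraction_to_0 (l : R) : Un_cv r 0 -> Un_cv (psum d) l -> Un_cv w 0.
Proof.
  intros r_cvg0 d_summable eps He.
  destruct (CV_Cauchy (psum d) (exist _ l d_summable) (eps / (2 * (K + 1)))) as [N HN].
  { apply Rdiv_lt_0_compat; lra. }
  pose proof (r_pos N). pose proof (w_ge0 N).
  destruct (r_cvg0 (eps * r N / (2 * (w N + 1)))) as [M HM].
  { apply Rdiv_lt_0_compat; nra. }
  exists (max N M). intros n Hn. unfold Rdist.
  rewrite Rminus_0_r, Rabs_right by (apply Rle_ge, w_ge0).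
  pose proof (contraction_unroll N (n - N)) as unroll.
  replace (N + (n - N))%nat with n in unroll by lia.
  specialize (HN n N ltac:(lia) ltac:(lia)). specialize (HM n ltac:(lia)).
  unfold Rdist in HN, HM. rewrite Rminus_0_r, Rabs_right in HM by (apply Rle_ge, Rlt_le, r_pos).
  pose proof (Rle_abs (psum d n - psum d N)).
  assert (K * (psum d n - psum d N) <= K * (eps / (2 * (K + 1))))
    by (apply Rmult_le_compat_l; lra).
  assert (K * (eps / (2 * (K + 1))) < eps / 2).
  { apply Rmult_lt_reg_r with (2 * (K + 1)); [lra|].
    replace (K * (eps / (2 * (K + 1))) * (2 * (K + 1))) with (K * eps) by (field; lra). nra. }
  assert (r n * (2 * (w N + 1)) < eps * r N).
  { replace (eps * r N) with (eps * r N / (2 * (w N + 1)) * (2 * (w N + 1))) by (field; lra).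
    apply Rmult_lt_compat_r; lra. }
  assert (r n * w N < eps / 2 * r N) by (pose proof (r_pos n); nra).
  assert (r n / r N * w N < eps / 2).
  { apply Rmult_lt_reg_r with (r N); [lra|].
    replace (r n / r N * w N * r N) with (r n * w N) by (field; lra). lra. }
  lra.
Qed.

End Contraction.

Section Construction.
Variables (lam : nat -> R) (s : R).
Hypothesis lam_pos : forall j, 0 < lam j.
Hypothesis lam_sum : infinite_sum lam s.

Definition tail (n : nat) : R := s - psum lam n.

Lemma tail_S n : tail (S n) = tail n - lam n.
Proof. unfold tail; simpl; ring. Qed.

Lemma psum_lam_le n : psum lam n <= s.
Proof.
  apply (growing_ineq (psum lam)); [|exact (Un_cv_psum lam s lam_sum)].
  intro m; simpl; specialize (lam_pos m); lra.
Qed.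

Lemma tail_pos n : 0 < tail n.
Proof. pose proof (psum_lam_le (S n)). pose proof (lam_pos n). unfold tail in *; simpl in *; lra. Qed.

Lemma lam_lt_tail n : lam n < tail n.
Proof. pose proof (tail_pos (S n)). rewrite tail_S in *. lra. Qed.

Lemma tail_le_s n : tail n <= s.
Proof. pose proof (psum_le lam 0 n (fun j => Rlt_le _ _ (lam_pos j)) ltac:(lia)). unfold tail; simpl in *; lra. Qed.

Lemma tail_cvg0 : Un_cv tail 0.
Proof.
  intros eps He. destruct (Un_cv_psum lam s lam_sum eps He) as [N HN].
  exists N. intros n Hn. specialize (HN n Hn). unfold Rdist, tail in *.
  rewrite Rminus_0_r, Rabs_minus_sym. exact HN.
Qed.

Definition rho (n : nat) : R := sqrt (tail n).
Definition sig (n : nat) : R := rho (S n) / rho n.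
Definition gam (n : nat) : R := sqrt (lam n) / rho n.

Lemma rho_pos n : 0 < rho n.
Proof. apply sqrt_lt_R0, tail_pos. Qed.

Lemma rho_sq n : rho n * rho n = tail n.
Proof. apply sqrt_sqrt. pose proof (tail_pos n). lra. Qed.

Lemma rho_cvg0 : Un_cv rho 0.
Proof.
  apply (Un_cv_0_of_sq_le rho tail); [intro n; apply sqrt_pos | intro n; rewrite rho_sq; lra |].
  exact tail_cvg0.
Qed.

Lemma sig_rho n : sig n * rho n = rho (S n).
Proof. unfold sig. pose proof (rho_pos n). field. lra. Qed.

Lemma sig_sq n : sig n * sig n = tail (S n) / tail n.
Proof.
  unfold sig. pose proof (rho_pos n).
  replace (rho (S n) / rho n * (rho (S n) / rho n)) with (rho (S n) * rho (S n) / (rho n * rho n))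
    by (field; lra).
  rewrite !rho_sq. reflexivity.
Qed.

Lemma gam_sq n : gam n * gam n = lam n / tail n.
Proof.
  unfold gam. pose proof (rho_pos n). pose proof (lam_pos n).
  replace (sqrt (lam n) / rho n * (sqrt (lam n) / rho n))
    with (sqrt (lam n) * sqrt (lam n) / (rho n * rho n)) by (field; lra).
  rewrite rho_sq, sqrt_sqrt by lra. reflexivity.
Qed.

Lemma sig_gam_sq n : sig n * sig n + gam n * gam n = 1.
Proof. rewrite sig_sq, gam_sq, tail_S. pose proof (tail_pos n). field. lra. Qed.

Lemma gam_ge0 n : 0 <= gam n.
Proof. unfold gam. apply Rmult_le_pos; [apply sqrt_pos | left; apply Rinv_0_lt_compat, rho_pos]. Qed.

Lemma sig_bounds n : 0 <= sig n <= 1.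
Proof.
  assert (0 <= sig n).
  { unfold sig. apply Rmult_le_pos; [apply sqrt_pos | left; apply Rinv_0_lt_compat, rho_pos]. }
  pose proof (sig_gam_sq n). pose proof (gam_ge0 n). split; nra.
Qed.

Hypothesis s_lt1 : s < 1.
Variable H : SepHilbert.
Variable u : nat -> H.
Hypothesis u_unit : forall j, hnorm H (u j) = 1.

Definition ydir (b : H) (n : nat) : H := orth_phase (inner H b (u (S n))) *v u (S n).

Fixpoint bvec (n : nat) : H :=
  match n with
  | O => RtoC (sqrt (1 - s)) *v u O
  | S k => RtoC (- sig k) *v bvec k +v RtoC (gam k) *v ydir (bvec k) k
  end.

Definition avec (n : nat) : H := RtoC (gam n) *v bvec n +v RtoC (sig n) *v ydir (bvec n) n.

Lemma sqnorm_u j : sqnorm H (u j) = 1.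
Proof.
  specialize (u_unit j). unfold hnorm in u_unit. fold (sqnorm H (u j)) in u_unit.
  rewrite <- (sqrt_sqrt (sqnorm H (u j))) by apply sqnorm_ge0. rewrite u_unit. ring.
Qed.

Lemma sqnorm_ydir b n : sqnorm H (ydir b n) = 1.
Proof. unfold ydir. rewrite sqnorm_scal, cabs2_orth_phase, sqnorm_u. ring. Qed.

Lemma Re_inner_ydir b n : Re (inner H b (ydir b n)) = 0.
Proof. unfold ydir. rewrite inner_scal_r. apply Re_conj_orth_phase. Qed.

Lemma sqnorm_bvec n : sqnorm H (bvec n) = 1 - tail n.
Proof.
  induction n as [|n IH]; cbn [bvec].
  - rewrite sqnorm_scal, sqnorm_u. unfold cabs2, tail; simpl.
    rewrite Rmult_0_l, Rplus_0_r, sqrt_sqrt by lra. ring.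
  - rewrite sqnorm_lincomb, IH, sqnorm_ydir, Re_inner_ydir, tail_S.
    replace (- sig n * - sig n) with (sig n * sig n) by ring.
    rewrite sig_sq, gam_sq, tail_S. pose proof (tail_pos n). field. lra.
Qed.

Lemma sqnorm_avec n : sqnorm H (avec n) = 1 - lam n.
Proof.
  unfold avec. rewrite sqnorm_lincomb, sqnorm_bvec, sqnorm_ydir, Re_inner_ydir.
  rewrite sig_sq, gam_sq, tail_S. pose proof (tail_pos n). field. lra.
Qed.

Lemma lam_lt1 n : lam n < 1.
Proof. pose proof (lam_lt_tail n). pose proof (tail_le_s n). lra. Qed.

Lemma avec_neq0 n : avec n <> hzero H.
Proof.
  intro E. pose proof (sqnorm_avec n) as Hn. pose proof (lam_lt1 n).
  rewrite E in Hn. unfold sqnorm in Hn. rewrite inner_zero_l in Hn. simpl in Hn. lra.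
Qed.

Lemma rank1_bvec_0 x : rank1 H (bvec 0) (bvec 0) x = RtoC (1 - s) *v rank1 H (u 0%nat) (u 0%nat) x.
Proof.
  cbn [bvec]. rewrite rank1_scal. f_equal. unfold cabs2; simpl.
  rewrite sqrt_sqrt by lra. f_equal. ring.
Qed.

Lemma rank1_ydir b n x : rank1 H (ydir b n) (ydir b n) x = rank1 H (u (S n)) (u (S n)) x.
Proof. unfold ydir. rewrite rank1_scal, cabs2_orth_phase. apply hscal_RtoC1. Qed.

Lemma rank1_avec_bvec x n :
  rank1 H (avec n) (avec n) x +v rank1 H (bvec (S n)) (bvec (S n)) x =
  rank1 H (bvec n) (bvec n) x +v rank1 H (u (S n)) (u (S n)) x.
Proof.
  cbn [bvec]. unfold avec. rewrite rank1_rot by (rewrite Rplus_comm; apply sig_gam_sq).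
  rewrite rank1_ydir. reflexivity.
Qed.

Lemma rank1_telescope x n :
  vsum H (fun j => rank1 H (avec j) (avec j) x) n +v rank1 H (bvec n) (bvec n) x =
  rank1 H (bvec 0) (bvec 0) x +v vsum H (fun j => rank1 H (u (S j)) (u (S j)) x) n.
Proof.
  induction n as [|n IH]; simpl vsum.
  - rewrite hadd_0_l, hadd_0. reflexivity.
  - rewrite <- hadd_assoc, rank1_avec_bvec, hadd_assoc, IH, <- hadd_assoc. reflexivity.
Qed.

Lemma cabs2_inner_bvec_S x n :
  cabs2 (inner H x (bvec (S n))) <=
  sig n * cabs2 (inner H x (bvec n)) + 2 * cabs2 (inner H x (u (S n))).
Proof.
  assert (conj_real : forall r, Cconj (RtoC r) = RtoC r) by (intro r; Cext; ring).
  cbn [bvec]. unfold ydir. rewrite inner_add_r, !inner_scal_r, !conj_real.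
  set (w := orth_phase _).
  replace (cabs2 (inner H x (u (S n)))) with (cabs2 (Cmul (Cconj w) (inner H x (u (S n)))))
    by (rewrite cabs2_mul, cabs2_conj; unfold w; rewrite cabs2_orth_phase; ring).
  apply cabs2_rot_le; [apply sig_bounds | apply gam_ge0 | apply sig_gam_sq].
Qed.

Lemma psum_cabs2_inner_u x n :
  psum (fun j => cabs2 (inner H x (u (S j)))) n =
  Re (inner H (vsum H (fun j => rank1 H (u (S j)) (u (S j)) x) n) x).
Proof.
  induction n as [|n IH]; simpl.
  - rewrite inner_zero_l. reflexivity.
  - rewrite inner_add_l. simpl. rewrite IH. f_equal.
    unfold rank1. rewrite inner_scal_l, (inner_conj x (u (S n))).
    unfold cabs2. destruct (inner H x _); simpl. ring.
Qed.

Lemma rank1_bvec_cvg0 x L :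
  vconv H (fun n => vsum H (fun j => rank1 H (u (S j)) (u (S j)) x) n) L ->
  Un_cv (fun n => hnorm H (rank1 H (bvec n) (bvec n) x)) 0.
Proof.
  intro HL. apply Un_cv_0_of_sq_le with (fun n => cabs2 (inner H x (bvec n))).
  - intro n; apply sqrt_pos.
  - intro n. unfold rank1. rewrite hnorm_scal, sqrt_sqrt, sqnorm_bvec
      by (apply Rmult_le_pos; [apply cabs2_ge0 | apply sqnorm_ge0]).
    pose proof (cabs2_ge0 (inner H x (bvec n))). pose proof (tail_pos n). nra.
  - apply (contraction_to_0 _ (fun j => cabs2 (inner H x (u (S j)))) rho sig 2)
      with (l := Re (inner H L x)); try lra.
    + exact rho_pos.
    + intro n; apply cabs2_ge0.
    + intro n; apply cabs2_ge0.
    + exact sig_bounds.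
    + exact sig_rho.
    + exact (cabs2_inner_bvec_S x).
    + exact rho_cvg0.
    + intros eps He. destruct (vconv_Re_inner H _ _ x HL eps He) as [N HN].
      exists N. intros n Hn. rewrite psum_cabs2_inner_u. exact (HN n Hn).
Qed.

Lemma sot_sum_rank1_avec (Bt : H -> H) :
  sot_sum H (fun j => rank1 H (u (S j)) (u (S j))) Bt ->
  sot_sum H (fun j => rank1 H (avec j) (avec j))
    (fun x => RtoC (1 - s) *v rank1 H (u 0%nat) (u 0%nat) x +v Bt x).
Proof.
  intros hS x. rewrite <- rank1_bvec_0.
  apply (vconv_perturb H _ (fun n => rank1 H (bvec n) (bvec n) x)
           (fun n => vsum H (fun j => rank1 H (u (S j)) (u (S j)) x) n)).
  - intro n. apply rank1_telescope.
  - apply hS.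
  - exact (rank1_bvec_cvg0 x (Bt x) (hS x)).
Qed.

End Construction.

Theorem lemma3p12 (H : SepHilbert) (lam : nat -> R) (u : nat -> H) (s : R) (Bt : H -> H)
  (hlam : forall j, 0 < lam j < 1/2)
  (hsum : infinite_sum lam s) (hs : s < 1)
  (hu : forall j, hnorm H (u j) = 1)
  (hS : sot_sum H (fun j => rank1 H (u (Datatypes.S j)) (u (Datatypes.S j))) Bt) :
  Adm H (fun x => hadd H (hscal H (RtoC (1 - s)) (rank1 H (u 0%nat) (u 0%nat) x)) (Bt x))
        (fun j => 1 - lam j).
Proof.
  assert (lam_pos : forall j, 0 < lam j) by (intro j; apply hlam).
  pose proof (lam_lt1 lam s lam_pos hsum hs) as lam_lt1.
  split; [intro j; specialize (lam_lt1 j); lra|].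
  split; [exists 1; intro j; specialize (lam_pos j); lra|].
  exists (fun j => proj_onto H (avec lam s H u j)). split.
  - intro j. apply proj_onto_rank1_proj, avec_neq0; assumption.
  - apply (sot_sum_ext H (fun j => rank1 H (avec lam s H u j) (avec lam s H u j))).
    + intros j x. rewrite <- (sqnorm_avec lam s lam_pos hsum hs H u hu j).
      symmetry. apply hscal_sqnorm_proj_onto, avec_neq0; assumption.
    + exact (sot_sum_rank1_avec lam s lam_pos hsum hs H u hu Bt hS).
Qed.
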